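(* Let $\mathcal{A}\subseteq\mathbb{R}^3$, $K\ge2$, $P_1,\ldots,P_K>0$, $\sigma^2>0$, and $h_1,\ldots,h_K\in L^2(\mathcal{A})$ with positive definite Gram matrix $\mathbf{R}$, $[\mathbf{R}]_{k_1,k_2}=\int_{\mathcal{A}}h_{k_1}^{*}h_{k_2}\,\mathrm{d}\mathbf{r}$. Fix $k$, let $\mathbf{h}_{\setminus k}(\mathbf{r})=[h_{k'}(\mathbf{r})]_{k'\neq k}\in\mathbb{C}^{1\times(K-1)}$, $\mathbf{R}_k=\int_{\mathcal{A}}\mathbf{h}_{\setminus k}^{\mathsf{H}}\mathbf{h}_{\setminus k}\,\mathrm{d}\mathbf{r}$, $\mathbf{P}_k=\mathrm{diag}(P_{k'}/\sigma^2)_{k'\neq k}$, and $\mathbf{C}_k=\mathbf{P}_k^{1/2}\mathbf{R}_k\mathbf{P}_k^{1/2}$ with eigendecomposition $\mathbf{C}_k=\mathbf{U}_k\,\mathrm{diag}(\lambda_{k'})_{k'\neq k}\mathbf{U}_k^{\mathsf{H}}$, $\lambda_{k'}>0$. Let $\mathbf{B}_k=\mathbf{U}_k\,\mathrm{diag}\big(\tfrac{1+\sqrt{1+\lambda_{k'}}}{\lambda_{k'}}\big)\mathbf{U}_k^{\mathsf{H}}$ and let $B_k$ be the operator on $L^2(\mathcal{A})$ with kernel $\delta(\mathbf{r}-\mathbf{r}')-\mathbf{h}_{\setminus k}(\mathbf{r})\mathbf{P}_k^{1/2}\mathbf{B}_k\mathbf{P}_k^{1/2}\mathbf{h}_{\setminus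 k}^{\mathsf{H}}(\mathbf{r}')$. For $w_k\in L^2(\mathcal{A})$ define $$f_{\mathsf{dm}}(w_k)=\iint_{\mathcal{A}^2}w_k^{*}(\mathbf{r})C_k(\mathbf{r},\mathbf{r}')w_k(\mathbf{r}')\,\mathrm{d}\mathbf{r}'\mathrm{d}\mathbf{r},\qquad C_k(\mathbf{r},\mathbf{r}')=\delta(\mathbf{r}-\mathbf{r}')+\sum_{k'\neq k}\frac{P_{k'}}{\sigma^2}h_{k'}(\mathbf{r})h_{k'}^{*}(\mathbf{r}'),$$ that is, $f_{\mathsf{dm}}(w_k)=\int_{\mathcal{A}}|w_k|^2\,\mathrm{d}\mathbf{r}+\sum_{k'\neq k}\frac{P_{k'}}{\sigma^2}\big|\int_{\mathcal{A}}h_{k'}^*w_k\,\mathrm{d}\mathbf{r}\big|^2$, and let $u_k(\mathbf{r})=\int_{\mathcal{A}}B_k(\mathbf{r},\mathbf{r}')w_k(\mathbf{r}')\,\mathrm{d}\mathbf{r}'$. Then $f_{\mathsf{dm}}(w_k)=\int_{\mathcal{A}}|u_k(\mathbf{r})|^2\,\mathrm{d}\mathbf{r}$.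
   Context: Kernels containing $\delta(\mathbf{r}-\mathbf{r}')$ denote the identity plus a finite-rank integral operator. Standing assumption: channel responses pairwise non-parallel and $\mathbf{R}$ positive definite. *)

From HB Require Import structures.
From mathcomp Require Import all_boot all_order all_algebra.
From mathcomp Require Import all_classical all_reals all_analysis.
From mathcomp Require Import complex.
Set Implicit Arguments. Unset Strict Implicit. Unset Printing Implicit Defensive.
Import Order.TTheory GRing.Theory Num.Theory.
Local Open Scope ring_scope.
Local Open Scope classical_set_scope.

Definition R3 (R : realType) := ((R * R) * R)%type.

Definition leb3 (R : realType) :=
  (((@lebesgue_measure R) \x (@lebesgue_measure R)) \x (@lebesgue_measure R))%E.

Definition sqmod (R : realType) (z : R[i]) : R := complex.Re z ^+ 2 + complex.Im z ^+ 2.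

Definition ctrmx (R : realType) m n (M : 'M[R[i]]_(m, n)) : 'M[R[i]]_(n, m) :=
  map_mx (@Num.conj R[i]) M^T.

Definition L2 (R : realType) (A : set (R3 R)) (f : R3 R -> R[i]) : Prop :=
  measurable_fun A (fun x => complex.Re (f x)) /\
  measurable_fun A (fun x => complex.Im (f x)) /\
  (@leb3 R).-integrable A (fun x => (sqmod (f x))%:E).

Definition cint (R : realType) (A : set (R3 R)) (f : R3 R -> R[i]) : R[i] :=
  ((Rintegral (@leb3 R) A (fun x => complex.Re (f x))) +i*
   (Rintegral (@leb3 R) A (fun x => complex.Im (f x))))%C.

Definition sqnormL2 (R : realType) (A : set (R3 R)) (f : R3 R -> R[i]) : R :=
  Rintegral (@leb3 R) A (fun x => sqmod (f x)).

Definition ipL2 (R : realType) (A : set (R3 R)) (f g : R3 R -> R[i]) : R[i] :=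
  cint A (fun x => Num.conj (f x) * g x).

Local Open Scope complex_scope.
Local Open Scope ring_scope.

Section Channel.
Variables (R : realType) (A : set (R3 R)) (K : nat).
Variables (P : 'I_K -> R) (s2 : R) (h : 'I_K -> R3 R -> R[i]) (k : 'I_K).

Definition gram : 'M[R[i]]_K := \matrix_(i, j) ipL2 A (h i) (h j).

(** h_{\k}(r) = [h_{k'}(r)]_{k' <> k}, a 1 x (K-1) row vector; the indices
    k' <> k are enumerated in increasing order by [lift k : 'I_K.-1 -> 'I_K]. *)
Definition hmk (r : R3 R) : 'rV[R[i]]_K.-1 := \row_j h (lift k j) r.

Definition Rk : 'M[R[i]]_K.-1 :=
  \matrix_(i, j) ipL2 A (h (lift k i)) (h (lift k j)).

Definition Pkhalf : 'M[R[i]]_K.-1 :=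
  diag_mx (\row_j (Num.sqrt (P (lift k j) / s2))%:C).

Definition Ck : 'M[R[i]]_K.-1 := Pkhalf *m Rk *m Pkhalf.

Definition Bk (U : 'M[R[i]]_K.-1) (lam : 'I_K.-1 -> R) : 'M[R[i]]_K.-1 :=
  U *m diag_mx (\row_j ((1 + Num.sqrt (1 + lam j)) / lam j)%:C) *m ctrmx U.

Definition Bk_fr (U : 'M[R[i]]_K.-1) (lam : 'I_K.-1 -> R) (r r' : R3 R) : R[i] :=
  (hmk r *m Pkhalf *m Bk U lam *m Pkhalf *m ctrmx (hmk r')) 0 0.

(** u_k(r) = int_A B_k(r, r') w_k(r') dr', where the kernel
    delta(r - r') - Bk_fr r r' is the identity minus a finite-rank operator *)
Definition uk (U : 'M[R[i]]_K.-1) (lam : 'I_K.-1 -> R) (w : R3 R -> R[i])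
  (r : R3 R) : R[i] :=
  w r - cint A (fun r' => Bk_fr U lam r r' * w r').

Definition fdm (w : R3 R -> R[i]) : R :=
  sqnormL2 A w + \sum_(k' < K | k' != k) P k' / s2 * sqmod (ipL2 A (h k') w).

End Channel.

From HB Require Import structures.
From mathcomp Require Import all_boot all_order all_algebra.
From mathcomp Require Import all_classical all_reals all_analysis.
From mathcomp Require Import complex measurable_realfun.
From mathcomp Require Import ring lra.
Import Order.TTheory GRing.Theory Num.Theory.
Local Open Scope ring_scope.
Local Open Scope complex_scope.

(** With [a_j = <h_j, w>] for [j <> k] and [M = P_k^(1/2) B_k P_k^(1/2)], the
    finite-rank kernel of [B_k] gives [u_k = w - sum_j (M a)_j h_j].  Expanding
    the Gram form, [||u_k||^2 = ||w||^2 + a^H (M R_k M - 2 M) a].  Each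
    [e = (1 + sqrt (1 + lambda)) / lambda] is a root of [lambda X^2 - 2 X - 1],
    so [B_k C_k B_k - 2 B_k = I], hence [M R_k M - 2 M = P_k], and [a^H P_k a]
    is exactly the interference term of [f_dm]. *)

Section ComplexParts.
Context {R : realType}.
Implicit Types z v : R[i].

Lemma complexP z v :
  complex.Re z = complex.Re v -> complex.Im z = complex.Im v -> z = v.
Proof. by case: z; case: v => ? ? ? ? /= -> ->. Qed.

Lemma complex_ReD z v : complex.Re (z + v) = complex.Re z + complex.Re v.
Proof. by case: z; case: v. Qed.

Lemma complex_ImD z v : complex.Im (z + v) = complex.Im z + complex.Im v.
Proof. by case: z; case: v. Qed.

Lemma complex_ReB z v : complex.Re (z - v) = complex.Re z - complex.Re v.
Proof. by case: z; case: v. Qed.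

Lemma complex_ImB z v : complex.Im (z - v) = complex.Im z - complex.Im v.
Proof. by case: z; case: v. Qed.

Lemma complex_ReM z v :
  complex.Re (z * v) = complex.Re z * complex.Re v - complex.Im z * complex.Im v.
Proof. by case: z; case: v. Qed.

Lemma complex_ImM z v :
  complex.Im (z * v) = complex.Re z * complex.Im v + complex.Im z * complex.Re v.
Proof. by case: z => ? ?; case: v => ? ? /=. Qed.

Lemma complex_ReJ z : complex.Re (Num.conj z) = complex.Re z.
Proof. by case: z. Qed.

Lemma complex_ImJ z : complex.Im (Num.conj z) = - complex.Im z.
Proof. by case: z. Qed.

Lemma conjM_sqmod z : Num.conj z * z = (sqmod z)%:C.
Proof.
by apply: complexP; rewrite ?complex_ReM ?complex_ImM complex_ReJ complex_ImJ /sqmod /=; ring.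
Qed.

Lemma sqr_Re_le_sqmod z : complex.Re z ^+ 2 <= sqmod z.
Proof. by rewrite lerDl sqr_ge0. Qed.

Lemma sqr_Im_le_sqmod z : complex.Im z ^+ 2 <= sqmod z.
Proof. by rewrite lerDr sqr_ge0. Qed.

End ComplexParts.

Section RealIntegrable.
Context {d : measure_display} {T : measurableType d} {R : realType}.
Context (mu : {measure set T -> \bar R}) {D : set T} (mD : measurable D).
Local Notation integrable f := (mu.-integrable D (EFin \o f)).

Lemma integrableD_EFin (f g : T -> R) :
  integrable f -> integrable g -> integrable (fun x => f x + g x).
Proof. by move=> If Ig; exact: eq_integrable mD _ _ _ (integrableD mD If Ig). Qed.

Lemma integrableB_EFin (f g : T -> R) :
  integrable f -> integrable g -> integrable (fun x => f x - g x).
Proof. by move=> If Ig; exact: eq_integrable mD _ _ _ (integrableB mD If Ig). Qed.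

Lemma integrableZl_EFin (c : R) (f : T -> R) :
  integrable f -> integrable (fun x => c * f x).
Proof. by move=> If; exact: eq_integrable mD _ _ _ (integrableZl mD c If). Qed.

Lemma integrableM_sqr_le (p q F G : T -> R) :
  measurable_fun D p -> measurable_fun D q -> integrable F -> integrable G ->
  (forall x, p x ^+ 2 <= F x) -> (forall x, q x ^+ 2 <= G x) ->
  integrable (fun x => p x * q x).
Proof.
move=> mp mq IF IG pF qG.
apply: (le_integrable mD _ _ (integrableD_EFin _ _ IF IG)) => [|x _].
  by apply/measurable_EFinP; exact: measurable_funM.
have pFx := pF x; have qGx := qG x.
rewrite /= lee_fin [`|F x + G x|]ger0_norm ?ler_norml; last by nra.
by apply/andP; split; nra.
Qed.

End RealIntegrable.

Section ComplexIntegral.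
Context {R : realType} {A : set (R3 R)}.
Hypothesis mA : measurable A.
Local Notation mu := (@leb3 R).
Implicit Types (f g : R3 R -> R[i]) (c : R[i]).

Definition cintegrable f : Prop :=
  mu.-integrable A (EFin \o (fun x => complex.Re (f x))) /\
  mu.-integrable A (EFin \o (fun x => complex.Im (f x))).

Lemma cintegrableD f g :
  cintegrable f -> cintegrable g -> cintegrable (fun x => f x + g x).
Proof.
move=> [Rf If] [Rg Ig]; split.
  by under eq_fun do rewrite complex_ReD; apply: integrableD_EFin.
by under eq_fun do rewrite complex_ImD; apply: integrableD_EFin.
Qed.

Lemma cintegrableB f g :
  cintegrable f -> cintegrable g -> cintegrable (fun x => f x - g x).
Proof.
move=> [Rf If] [Rg Ig]; split.
  by under eq_fun do rewrite complex_ReB; apply: integrableB_EFin.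
by under eq_fun do rewrite complex_ImB; apply: integrableB_EFin.
Qed.

Lemma cintegrableZ c f : cintegrable f -> cintegrable (fun x => c * f x).
Proof.
move=> [Rf If]; split.
  under eq_fun do rewrite complex_ReM.
  exact (integrableB_EFin mu mA _ _
           (integrableZl_EFin mu mA _ _ Rf) (integrableZl_EFin mu mA _ _ If)).
under eq_fun do rewrite complex_ImM.
exact (integrableD_EFin mu mA _ _
         (integrableZl_EFin mu mA _ _ If) (integrableZl_EFin mu mA _ _ Rf)).
Qed.

Lemma cintegrable_sum I (r : seq I) (c : I -> R[i]) (F : I -> R3 R -> R[i]) :
  (forall i, cintegrable (F i)) ->
  cintegrable (fun x => \sum_(i <- r) c i * F i x).
Proof.
move=> IF; elim: r => [|i r IHr].
  by under eq_fun do rewrite big_nil; split; exact: integrable0.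
under eq_fun do rewrite big_cons.
exact: cintegrableD _ _ (cintegrableZ _ _ (IF i)) IHr.
Qed.

Lemma cintD f g : cintegrable f -> cintegrable g ->
  cint A (fun x => f x + g x) = cint A f + cint A g.
Proof.
move=> [Rf If] [Rg Ig]; apply: complexP => /=; rewrite -?RintegralD //.
  by apply: eq_Rintegral => x _; rewrite complex_ReD.
by apply: eq_Rintegral => x _; rewrite complex_ImD.
Qed.

Lemma cintB f g : cintegrable f -> cintegrable g ->
  cint A (fun x => f x - g x) = cint A f - cint A g.
Proof.
move=> [Rf If] [Rg Ig]; apply: complexP => /=; rewrite -?RintegralB //.
  by apply: eq_Rintegral => x _; rewrite complex_ReB.
by apply: eq_Rintegral => x _; rewrite complex_ImB.
Qed.

Lemma cintZ c f : cintegrable f -> cint A (fun x => c * f x) = c * cint A f.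
Proof.
move=> [Rf If]; apply: complexP; rewrite ?complex_ReM ?complex_ImM /=.
  rewrite -!RintegralZl // -RintegralB //; try exact: integrableZl_EFin.
  by apply: eq_Rintegral => x _; rewrite complex_ReM.
rewrite -!RintegralZl // -RintegralD //; try exact: integrableZl_EFin.
by apply: eq_Rintegral => x _; rewrite complex_ImM.
Qed.

Lemma cint_sum I (r : seq I) (c : I -> R[i]) (F : I -> R3 R -> R[i]) :
  (forall i, cintegrable (F i)) ->
  cint A (fun x => \sum_(i <- r) c i * F i x) = \sum_(i <- r) c i * cint A (F i).
Proof.
move=> IF; elim: r => [|i r IHr].
  under eq_fun do rewrite big_nil.
  by rewrite big_nil; apply: complexP; rewrite /= Rintegral_cst // mul0r.
under eq_fun do rewrite big_cons.
by rewrite cintD ?cintZ ?IHr ?big_cons //; [exact: cintegrableZ | exact: cintegrable_sum].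
Qed.

Lemma cintJ f : cintegrable f -> cint A (fun x => Num.conj (f x)) = Num.conj (cint A f).
Proof.
move=> [_ If]; apply: complexP => /=.
  by apply: eq_Rintegral => x _; rewrite complex_ReJ.
rewrite -mulN1r -RintegralZl //; apply: eq_Rintegral => x _.
by rewrite complex_ImJ mulN1r.
Qed.

Lemma cintegrable_conjM {f g} : L2 A f -> L2 A g ->
  cintegrable (fun x => Num.conj (f x) * g x).
Proof.
move=> [mRf [mIf If]] [mRg [mIg Ig]].
have sqRe (h : R3 R -> R[i]) x := sqr_Re_le_sqmod (h x).
have sqIm (h : R3 R -> R[i]) x := sqr_Im_le_sqmod (h x).
have Iprod p q mp mq := integrableM_sqr_le mu mA p q _ _ mp mq If Ig.
split.
- under eq_fun do rewrite complex_ReM complex_ReJ complex_ImJ mulNr opprK.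
  exact (integrableD_EFin mu mA _ _ (Iprod _ _ mRf mRg (sqRe f) (sqRe g))
                                   (Iprod _ _ mIf mIg (sqIm f) (sqIm g))).
- under eq_fun do rewrite complex_ImM complex_ReJ complex_ImJ mulNr.
  exact (integrableB_EFin mu mA _ _ (Iprod _ _ mRf mIg (sqRe f) (sqIm g))
                                   (Iprod _ _ mIf mRg (sqIm f) (sqRe g))).
Qed.

Lemma ipL2C {f g} : L2 A f -> L2 A g -> ipL2 A g f = Num.conj (ipL2 A f g).
Proof.
move=> Lf Lg; rewrite /ipL2 -cintJ; last exact: cintegrable_conjM.
by congr cint; apply: funext => x; rewrite rmorphM /= conjCK mulrC.
Qed.

Lemma sqnormL2E f : sqnormL2 A f = complex.Re (ipL2 A f f).
Proof. by apply: eq_Rintegral => x _; rewrite conjM_sqmod. Qed.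

End ComplexIntegral.

Arguments cintegrable {R} A f.

Section ConjTranspose.
Context {R : realType}.

Lemma ctrmxE m n (M : 'M[R[i]]_(m, n)) i j : ctrmx M i j = Num.conj (M j i).
Proof. by rewrite !mxE. Qed.

Lemma ctrmxM m n p (M : 'M[R[i]]_(m, n)) (N : 'M[R[i]]_(n, p)) :
  ctrmx (M *m N) = ctrmx N *m ctrmx M.
Proof. by rewrite /ctrmx trmx_mul map_mxM. Qed.

Lemma ctrmxK m n (M : 'M[R[i]]_(m, n)) : ctrmx (ctrmx M) = M.
Proof. exact: trmxCK. Qed.

Lemma ctrmx_diag_real n (d : 'I_n -> R) :
  ctrmx (diag_mx (\row_j (d j)%:C)) = diag_mx (\row_j (d j)%:C).
Proof.
apply/matrixP => i j; rewrite ctrmxE !mxE eq_sym.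
case: eqP => [->|_]; rewrite ?mulr1n ?mulr0n ?conjC0 //.
by apply: complexP => /=; rewrite ?oppr0.
Qed.

Lemma quadratic_form_eq {n} {M G Q : 'M[R[i]]_n} :
  ctrmx M = M -> M *m G *m M - M - M = Q ->
  forall a : 'cV_n, let c := M *m a in
  ctrmx c *m G *m c - ctrmx a *m c - ctrmx c *m a = ctrmx a *m Q *m a.
Proof.
move=> MH <- a c; rewrite /c ctrmxM MH.
by rewrite !mulmxBr !mulmxBl !mulmxA.
Qed.

Lemma quadratic_form_diag n (d : 'I_n -> R) (a : 'cV[R[i]]_n) :
  (ctrmx a *m diag_mx (\row_j (d j)%:C) *m a) 0 0 = (\sum_j d j * sqmod (a j 0))%:C.
Proof.
rewrite mxE rmorph_sum; apply: eq_bigr => j _.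
by rewrite mul_mx_diag !mxE mulrAC conjM_sqmod -rmorphM mulrC.
Qed.

End ConjTranspose.

Section GramExpansion.
Context {R : realType} (A : set (R3 R)) {n : nat}.
Hypothesis mA : measurable A.
Implicit Types (f : R3 R -> R[i]) (g : 'I_n -> R3 R -> R[i]).

Definition ipL2_col g f : 'cV[R[i]]_n := \col_j ipL2 A (g j) f.

Lemma cint_finite_rank (x : 'rV[R[i]]_n) g f :
  (forall j, L2 A (g j)) -> L2 A f ->
  cint A (fun r => (x *m ctrmx (\row_j g j r)) 0 0 * f r) = (x *m ipL2_col g f) 0 0.
Proof.
move=> Lg Lf; under eq_fun => r.
  rewrite mxE mulr_suml; under eq_bigr => j _ do rewrite !mxE -mulrA.
  over.
rewrite cint_sum // => [|j]; last exact: cintegrable_conjM.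
by rewrite mxE; apply: eq_bigr => j _; rewrite mxE.
Qed.

Lemma conj_sub_comb_mul (c : 'cV[R[i]]_n) (y : R[i]) (z : 'I_n -> R[i]) :
  let u := y - \sum_j c j 0 * z j in
  Num.conj u * u = Num.conj y * y +
    (\sum_i Num.conj (c i 0) * \sum_j c j 0 * (Num.conj (z i) * z j)
     - \sum_j c j 0 * (Num.conj y * z j)
     - \sum_i Num.conj (c i 0) * (Num.conj (z i) * y)).
Proof.
have -> : \sum_i Num.conj (c i 0) * \sum_j c j 0 * (Num.conj (z i) * z j) =
    (\sum_i Num.conj (c i 0) * Num.conj (z i)) * \sum_j c j 0 * z j.
  rewrite mulr_suml; apply: eq_bigr => i _; rewrite !mulr_sumr.
  by apply: eq_bigr => j _ /=; ring.
have -> : \sum_j c j 0 * (Num.conj y * z j) = Num.conj y * \sum_j c j 0 * z j.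
  by rewrite mulr_sumr; apply: eq_bigr => j _ /=; ring.
have -> : \sum_i Num.conj (c i 0) * (Num.conj (z i) * y) =
    (\sum_i Num.conj (c i 0) * Num.conj (z i)) * y.
  by rewrite mulr_suml; apply: eq_bigr => i _ /=; ring.
rewrite /= rmorphB rmorph_sum /=.
under eq_bigr do rewrite rmorphM.
ring.
Qed.

Lemma ipL2_sub_comb f g (c : 'cV[R[i]]_n) :
  L2 A f -> (forall j, L2 A (g j)) ->
  let u x := f x - \sum_j c j 0 * g j x in
  ipL2 A u u = ipL2 A f f + (ctrmx c *m gram A g *m c
    - ctrmx (ipL2_col g f) *m c - ctrmx c *m ipL2_col g f) 0 0.
Proof.
move=> Lf Lg u; rewrite /ipL2.
under eq_fun do rewrite conj_sub_comb_mul.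
have Iff := cintegrable_conjM mA Lf Lf.
have Ifg j := cintegrable_conjM mA Lf (Lg j).
have Igf i := cintegrable_conjM mA (Lg i) Lf.
have Igg i j := cintegrable_conjM mA (Lg i) (Lg j).
have Iggc i : cintegrable A (fun x => \sum_j c j 0 * (Num.conj (g i x) * g j x)).
  exact: cintegrable_sum.
rewrite cintD ?cintB ?cint_sum //;
  try by repeat apply: (cintegrableB mA); exact: (cintegrable_sum mA).
under eq_bigr do rewrite cint_sum //.
congr (_ + _); rewrite -mulmxA !mxE; congr (_ - _ - _); apply: eq_bigr => i _.
- by rewrite ctrmxE !mxE; congr (_ * _); apply: eq_bigr => j _; rewrite !mxE mulrC.
- by rewrite ctrmxE !mxE -(ipL2C mA (Lg i) Lf) mulrC.
- by rewrite ctrmxE !mxE.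
Qed.

End GramExpansion.

Lemma big_ord_neq_lift (V : zmodType) n (i0 : 'I_n) (F : 'I_n -> V) :
  \sum_(i < n | i != i0) F i = \sum_(j < n.-1) F (lift i0 j).
Proof.
apply: (addrI (F i0)); rewrite -(bigD1 _ (P := predT)) //.
by rewrite (bigD1_ord i0 (P := predT)).
Qed.

Lemma quadratic_root_eq (R : rcfType) (l : R) : 0 < l ->
  let e := (1 + Num.sqrt (1 + l)) / l in e * l * e - e - e = 1.
Proof.
move=> l_gt0 e; have l_neq0 : l != 0 by rewrite gt_eqF.
have : Num.sqrt (1 + l) ^+ 2 = 1 + l by rewrite sqr_sqrtr // addr_ge0 // ltW.
rewrite /e mulfVK // mulrA -!mulrBl; set s := Num.sqrt (1 + l) => s2.
have -> : (1 + s) * (1 + s) - (1 + s) - (1 + s) = l by nra.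
exact: divff.
Qed.

Lemma mulmx_sandwich_quadratic (C : pzRingType) n (P B G : 'M[C]_n) :
  B *m (P *m G *m P) *m B - B - B = 1%:M ->
  let M := P *m B *m P in M *m G *m M - M - M = P *m P.
Proof.
move=> HB M.
transitivity (P *m (B *m (P *m G *m P) *m B - B - B) *m P); last by rewrite HB mulmx1.
by rewrite /M !mulmxBr !mulmxBl !mulmxA.
Qed.

Section Spectral.
Context {R : realType}.

Lemma unitary_conj_mul n (U M N : 'M[R[i]]_n) : U \is unitarymx ->
  U *m M *m ctrmx U *m (U *m N *m ctrmx U) = U *m (M *m N) *m ctrmx U.
Proof. by move=> Uu; rewrite !mulmxA (mulmxKtV _ Uu). Qed.

Lemma Bk_quadratic K (U : 'M[R[i]]_K.-1) (lam : 'I_K.-1 -> R) :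
  U \is unitarymx -> (forall j, 0 < lam j) ->
  let B := Bk U lam in
  B *m (U *m diag_mx (\row_j (lam j)%:C) *m ctrmx U) *m B - B - B = 1%:M.
Proof.
move=> Uu lam_gt0 B; rewrite /B /Bk !unitary_conj_mul // -!mulmxBl -!mulmxBr.
set D := (X in U *m X *m _).
suff -> : D = 1%:M by rewrite mulmx1; apply/unitarymxP.
apply/matrixP => i j; rewrite /D !mulmx_diag !mxE.
case: eqVneq => [->|_]; rewrite ?mulr1n ?mulr0n ?subr0 //.
by rewrite -!rmorphM -!rmorphB /= quadratic_root_eq.
Qed.

Lemma ctrmx_Bk K (U : 'M[R[i]]_K.-1) (lam : 'I_K.-1 -> R) :
  ctrmx (Bk U lam) = Bk U lam.
Proof. by rewrite /Bk !ctrmxM ctrmxK ctrmx_diag_real mulmxA. Qed.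

End Spectral.

Lemma Pkhalf_sqr (R : realType) K (P : 'I_K -> R) (s2 : R) (k : 'I_K) :
  (forall j, 0 < P j) -> 0 < s2 ->
  Pkhalf P s2 k *m Pkhalf P s2 k = diag_mx (\row_j (P (lift k j) / s2)%:C).
Proof.
move=> P_gt0 s2_gt0; rewrite mulmx_diag; congr diag_mx; apply/rowP => j.
by rewrite !mxE -rmorphM -expr2 sqr_sqrtr // divr_ge0 // ltW.
Qed.

Theorem lemma9 (R : realType) (A : set (R3 R)) (K : nat)
  (P : 'I_K -> R) (s2 : R) (h : 'I_K -> R3 R -> R[i]) (k : 'I_K)
  (U : 'M[R[i]]_K.-1) (lam : 'I_K.-1 -> R) (w : R3 R -> R[i]) :
  measurable A ->
  (2 <= K)%N ->
  (forall j, 0 < P j) ->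
  0 < s2 ->
  (forall j, L2 A (h j)) ->
  (forall x : 'cV[R[i]]_K, x != 0 -> 0 < (ctrmx x *m gram A h *m x) 0 0) ->
  U \is unitarymx ->
  (forall j, 0 < lam j) ->
  Ck A P s2 h k = U *m diag_mx (\row_j (lam j)%:C) *m ctrmx U ->
  L2 A w ->
  fdm A P s2 h k w = sqnormL2 A (uk A P s2 h k U lam w).
Proof.
move=> mA _ P_gt0 s2_gt0 hL2 _ Uu lam_gt0 HC wL2.
pose hk j := h (lift k j); pose a := ipL2_col A hk w.
pose Pk := Pkhalf P s2 k; pose B := Bk U lam; pose M := Pk *m B *m Pk.
have hkL2 j : L2 A (hk j) := hL2 (lift k j).
have MH : ctrmx M = M.
  by rewrite /M ctrmxM [ctrmx (_ *m _)]ctrmxM ctrmx_Bk ctrmx_diag_real mulmxA.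
have MGM : M *m gram A hk *m M - M - M = Pk *m Pk.
  apply: mulmx_sandwich_quadratic.
  by rewrite -[_ *m gram A hk *m _]/(Ck A P s2 h k) HC; exact: Bk_quadratic.
have uE : uk A P s2 h k U lam w = fun r => w r - \sum_j (M *m a) j 0 * hk j r.
  apply: funext => r; rewrite /uk /Bk_fr cint_finite_rank //.
  by rewrite /M -!mulmxA mxE; congr (_ - _); apply: eq_bigr => j _; rewrite mxE mulrC.
rewrite uE sqnormL2E ipL2_sub_comb // -/a (quadratic_form_eq MH MGM).
rewrite Pkhalf_sqr // quadratic_form_diag complex_ReD -sqnormL2E /= /fdm big_ord_neq_lift.
by congr (_ + _); apply: eq_bigr => j _; rewrite mxE.
Qed.
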